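(* Let $G$ be a reduced torsion-free abelian group. Then the following are equivalent: (i) $G$ is semi-generalized Bassian; (ii) $G$ is Bassian; (iii) $G$ has finite rank.
   Context: All groups are additively written abelian groups. A subgroup $H$ of a group $A$ is essential in $A$ if $H \cap S \neq \{0\}$ for every non-zero subgroup $S$ of $A$. A group $G$ is Bassian if the existence of an injective homomorphism $G\to G/N$ for a subgroup $N\le G$ forces $N=\{0\}$. $G$ is semi-generalized Bassian if, for every subgroup $H \le G$, the existence of an injective homomorphism $G \to G/H$ implies that $H$ is an essential subgroup of some direct summand of $G$. *)

(* abelian groups are zmodType's (additively written). *)
From mathcomp Require Import all_boot all_algebra.
Set Implicit Arguments. Unset Strict Implicit. Unset Printing Implicit Defensive.
Import GRing.Theory.
Local Open Scope ring_scope.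

Definition is_subgroup (G : zmodType) (H : G -> Prop) : Prop :=
  H 0 /\ (forall x y, H x -> H y -> H (x - y)).

Definition is_hom (G Q : zmodType) (f : G -> Q) : Prop :=
  forall x y, f (x + y) = f x + f y.

(* pi : G -> Q presents Q as the quotient G/N (surjective hom with kernel N). *)
Definition is_quotient_map (G Q : zmodType) (N : G -> Prop) (pi : G -> Q) : Prop :=
  [/\ is_hom pi, (forall q, exists g, pi g = q) & (forall x, pi x = 0 <-> N x)].

(* There is an injective homomorphism G -> G/N (for some, equivalently any,
   realisation of the quotient G/N). *)
Definition embeds_in_quotient (G : zmodType) (N : G -> Prop) : Prop :=
  exists (Q : zmodType) (pi : G -> Q) (f : G -> Q),
    [/\ is_quotient_map N pi, is_hom f & injective f].

Definition essential_in (G : zmodType) (H A : G -> Prop) : Prop :=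
  (forall x, H x -> A x) /\
  (forall S : G -> Prop, is_subgroup S -> (forall x, S x -> A x) ->
     (exists x, S x /\ x <> 0) -> exists x, [/\ H x, S x & x <> 0]).

Definition direct_summand (G : zmodType) (A : G -> Prop) : Prop :=
  exists B : G -> Prop, [/\ is_subgroup A, is_subgroup B,
     (forall x, A x -> B x -> x = 0) &
     (forall g, exists a b, [/\ A a, B b & g = a + b])].

Definition Bassian (G : zmodType) : Prop :=
  forall N : G -> Prop, is_subgroup N -> embeds_in_quotient N ->
    forall x, N x -> x = 0.

Definition semi_generalized_Bassian (G : zmodType) : Prop :=
  forall H : G -> Prop, is_subgroup H -> embeds_in_quotient H ->
    exists A : G -> Prop, direct_summand A /\ essential_in H A.

Definition torsion_free (G : zmodType) : Prop :=
  forall (x : G) (n : nat), x *+ n.+1 = 0 -> x = 0.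

Definition divisible_subgroup (G : zmodType) (D : G -> Prop) : Prop :=
  is_subgroup D /\ (forall x n, D x -> exists y, D y /\ y *+ n.+1 = x).

Definition reduced (G : zmodType) : Prop :=
  forall D : G -> Prop, divisible_subgroup D -> forall x, D x -> x = 0.

Definition Z_independent (G : zmodType) (s : seq G) : Prop :=
  forall c : seq int, size c = size s ->
    \sum_(i < size s) s`_i *~ c`_i = 0 -> forall i, c`_i = 0.

Definition finite_rank (G : zmodType) : Prop :=
  exists n : nat, forall s : seq G, Z_independent s -> (size s <= n)%N.

(* If [G] has finite rank and embeds in [G/N], a maximal independent family
   of [G] maps injectively into [G/N]; lifting its image and appending a
   nonzero element of [N] gives a larger independent family of [G], so
   [N = 0].  Bassian groups are semi-generalized Bassian with [A = 0].
   Conversely, let [X] be a maximal independent subset of a torsion-free [G]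
   of infinite rank.  Every map [X -> Q] extends uniquely to a homomorphism
   [G -> Q]; choosing an injection [(y, n) |-> x_{y,n}] of [X * nat] into
   [X], there is [h : G -> Q^X] with [h (x_{y,n}) = e_y / n!].  Its image contains every finitely supported
   rational vector, in particular the coordinates of [G] with respect to [X],
   so [G] embeds in [G / ker h].  If [ker h] were essential in a summand [A]
   of [G = A + B], the [B]-components of [h^-1 (Q e_y)] would form a
   divisible subgroup, which vanishes when [G] is reduced; hence [x_{y,0}]
   lies in [A] although [<x_{y,0}>] meets [ker h] trivially. *)

From HB Require Import structures.
From mathcomp Require Import all_boot all_algebra.
From mathcomp Require Import boolp classical_sets functions ring.
From Stdlib Require Import Cantor.
Set Implicit Arguments. Unset Strict Implicit. Unset Printing Implicit Defensive.
Import GRing.Theory Num.Theory.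
Local Open Scope ring_scope.

Section Homomorphisms.
Variables (G Q : zmodType) (f : G -> Q).
Hypothesis hom_f : is_hom f.

Lemma hom0 : f 0 = 0.
Proof. by apply: (addrI (f 0)); rewrite -hom_f !addr0. Qed.

Lemma homN x : f (- x) = - f x.
Proof. by apply/eqP; rewrite -addr_eq0 -hom_f addNr hom0. Qed.

Lemma homB x y : f (x - y) = f x - f y.
Proof. by rewrite hom_f homN. Qed.

Lemma hom_sum I r (P : pred I) F :
  f (\sum_(i <- r | P i) F i) = \sum_(i <- r | P i) f (F i).
Proof. exact: (big_morph f hom_f hom0). Qed.

Lemma homMn x n : f (x *+ n) = f x *+ n.
Proof. by elim: n => [|n IH]; rewrite ?hom0 // !mulrS hom_f IH. Qed.

Lemma homMz x z : f (x *~ z) = f x *~ z.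
Proof. by case: z => n; rewrite ?NegzE ?mulrNz -?pmulrn ?homN homMn. Qed.

End Homomorphisms.

Section Subgroups.
Variables (G : zmodType) (S : G -> Prop).
Hypothesis sub_S : is_subgroup S.

Lemma subgroup0 : S 0.
Proof. by case: sub_S. Qed.

Lemma subgroupB x y : S x -> S y -> S (x - y).
Proof. by case: sub_S => _; apply. Qed.

Lemma subgroupN x : S x -> S (- x).
Proof. by rewrite -sub0r; apply/subgroupB/subgroup0. Qed.

Lemma subgroupD x y : S x -> S y -> S (x + y).
Proof. by move=> Sx /subgroupN; rewrite -{2}[y]opprK; apply: subgroupB. Qed.

Lemma subgroupMn x n : S x -> S (x *+ n).
Proof.
move=> Sx; elim: n => [|n IH]; first by rewrite mulr0n; apply: subgroup0.
by rewrite mulrS; apply: subgroupD.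
Qed.

Lemma subgroupMz x k : S x -> S (x *~ k).
Proof.
move=> Sx; case: k => n; rewrite ?NegzE ?mulrNz -pmulrn; last apply: subgroupN.
all: exact: subgroupMn.
Qed.

End Subgroups.

Lemma torsion_free_mulrz (G : zmodType) (x : G) c :
  torsion_free G -> x *~ c = 0 -> c != 0 -> x = 0.
Proof.
move=> tf; case: c => [[|n]|n] //= xc _; first exact: (tf x n).
by apply: (tf x n); apply: oppr_inj; rewrite oppr0 -xc NegzE mulrNz.
Qed.

Lemma Z_independent_map (G Q : zmodType) (f : G -> Q) (s : seq G) :
  is_hom f -> injective f -> Z_independent s -> Z_independent (map f s).
Proof.
move=> hom_f inj_f ind_s c; rewrite size_map => size_c.
under eq_bigr => i _ do rewrite (nth_map 0) // -(homMz hom_f).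
by rewrite -(hom_sum hom_f) -(hom0 hom_f) => /inj_f; apply: ind_s.
Qed.

Lemma Z_independent_rcons_kernel (G Q : zmodType) (pi : G -> Q) (t : seq G) (x : G) :
  torsion_free G -> is_hom pi -> Z_independent (map pi t) -> pi x = 0 -> x != 0 ->
  Z_independent (rcons t x).
Proof.
move=> tf hom_pi ind_t pix0 x0 c; rewrite size_rcons => size_c.
rewrite big_ord_recr /= nth_rcons ltnn eqxx.
under eq_bigr => i _ do rewrite nth_rcons ltn_ord.
move=> sum0; have ct j : (j < size t)%N -> c`_j = 0.
  move=> jt; rewrite -(nth_take _ jt); apply: ind_t; rewrite ?size_take ?size_map //.
    by rewrite size_c ltnSn.
  move/(congr1 pi): sum0; rewrite hom_pi (homMz hom_pi) pix0 mul0rz addr0 (hom_sum hom_pi).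
  rewrite (hom0 hom_pi) => sum_pi; apply: etrans sum_pi; apply: eq_bigr => i _.
  by rewrite (nth_map 0) // nth_take // (homMz hom_pi).
move: sum0; rewrite big1 ?add0r => [xc|i _]; last by rewrite ct ?mulr0z.
move=> i; case: (ltngtP i (size t)) => [/ct //|ti|->]; first by rewrite nth_default ?size_c.
by apply/eqP; apply: contraT => c0; rewrite (torsion_free_mulrz tf xc c0) eqxx in x0.
Qed.

Lemma finite_rank_Bassian (G : zmodType) :
  torsion_free G -> finite_rank G -> Bassian G.
Proof.
move=> tf [n rank_n] N _ [Q [pi [f [[hom_pi pi_onto ker_pi] hom_f inj_f]]]] x Nx.
pose P k := `[< exists s : seq G, size s = k /\ Z_independent s >].
have P0 : exists k, P k.
  by exists 0%N; apply/asboolP; exists [::]; split=> // c /size0nil -> _ i; rewrite nth_nil.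
have P_le k : P k -> (k <= n)%N by move/asboolP => [s [<- /rank_n]].
have [r /asboolP [s [size_s ind_s]] r_max] := ex_maxnP P0 P_le.
have [lift liftK] := choice pi_onto.
pose t := map (lift \o f) s.
have pi_t : map pi t = map f s by rewrite -map_comp; apply: eq_map => y; apply: liftK.
apply/eqP; apply: contraT => x0.
have ind_tx : Z_independent (rcons t x).
  apply: (Z_independent_rcons_kernel tf hom_pi) => //; last exact/ker_pi.
  by rewrite pi_t; apply: Z_independent_map.
have /r_max : P (size (rcons t x)) by apply/asboolP; exists (rcons t x).
by rewrite size_rcons size_map size_s ltnn.
Qed.

Lemma Bassian_semi_generalized_Bassian (G : zmodType) :
  Bassian G -> semi_generalized_Bassian G.
Proof.
move=> bassian H sub_H emb; have H0 := bassian H sub_H emb.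
exists (fun x => x = 0); split.
  exists (fun _ => True); split => //.
  - by split=> // x y -> ->; rewrite subr0.
  - by move=> g; exists 0, g; rewrite add0r.
split; first by move=> x /H0.
by move=> S _ S0 [x [Sx x0]]; case: x0; apply: S0.
Qed.

(* Formal [Z]-combinations are lists of (element, coefficient) pairs, in
   which an element may occur several times; [coef] collects its coefficients. *)
Section FormalCombinations.
Variable G : zmodType.
Implicit Types (s : seq (G * int)) (X : G -> Prop) (W : G -> rat).

Definition eval s : G := \sum_(p <- s) p.1 *~ p.2.
Definition evalq W s : rat := \sum_(p <- s) p.2%:~R * W p.1.
Definition coef s (y : G) : int := \sum_(p <- s | p.1 == y) p.2.
Definition scale (k : int) s := [seq (p.1, p.2 * k) | p <- s].
Definition supported X s := forall p, p \in s -> X p.1.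
Definition independent X :=
  forall s, supported X s -> eval s = 0 -> forall y, coef s y = 0.
Definition maximal_independent X :=
  independent X /\ forall g, ~ X g -> ~ independent (fun x => X x \/ x = g).

Lemma eval_cat s1 s2 : eval (s1 ++ s2) = eval s1 + eval s2.
Proof. by rewrite /eval big_cat. Qed.

Lemma evalq_cat W s1 s2 : evalq W (s1 ++ s2) = evalq W s1 + evalq W s2.
Proof. by rewrite /evalq big_cat. Qed.

Lemma eval_scale k s : eval (scale k s) = eval s *~ k.
Proof. by rewrite /eval big_map mulrz_suml; apply: eq_bigr => p _; rewrite mulrzA. Qed.

Lemma evalq_scale W k s : evalq W (scale k s) = k%:~R * evalq W s.
Proof.
rewrite /evalq big_map mulr_sumr; apply: eq_bigr => p _ /=.
by rewrite intrM mulrAC mulrC.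
Qed.

Lemma supported_cat X s1 s2 :
  supported X s1 -> supported X s2 -> supported X (s1 ++ s2).
Proof. by move=> X1 X2 p; rewrite mem_cat => /orP[/X1|/X2]. Qed.

Lemma supported_scale X k s : supported X s -> supported X (scale k s).
Proof. by move=> Xs p /mapP[q /Xs Xq ->]. Qed.

Lemma supported1 X x : X x -> supported X [:: (x, 1)].
Proof. by move=> Xx p; rewrite inE => /eqP ->. Qed.

Lemma eval1 (x : G) : eval [:: (x, 1)] = x.
Proof. by rewrite /eval big_seq1. Qed.

Lemma independent_neq0 X x : independent X -> X x -> x != 0.
Proof.
move=> ind_X Xx; apply/eqP => x0; have := ind_X _ (supported1 Xx).
by rewrite eval1 => /(_ x0 x); rewrite /coef big_cons big_nil /= eqxx addr0.
Qed.

Lemma big_regroup (M : zmodType) (r : seq G) s (F : G * int -> M) : uniq r ->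
  (forall p, p \in s -> p.1 \in r) ->
  \sum_(p <- s) F p = \sum_(y <- r) \sum_(p <- s | p.1 == y) F p.
Proof.
move=> uniq_r s_r; under [RHS]eq_bigr => y _ do rewrite big_mkcond.
rewrite [RHS]exchange_big /=; apply: eq_big_seq => p ps.
rewrite -big_mkcond big_const_seq.
have -> : count (fun y => p.1 == y) r = 1%N.
  by rewrite (eq_count (a2 := pred1 p.1)) ?count_uniq_mem ?s_r // => y /=; rewrite eq_sym.
by rewrite /= addr0.
Qed.

Lemma eval_regroup (r : seq G) s : uniq r -> (forall p, p \in s -> p.1 \in r) ->
  eval s = \sum_(y <- r) y *~ coef s y.
Proof.
move=> uniq_r s_r; rewrite /eval (big_regroup _ uniq_r s_r).
by apply: eq_bigr => y _; rewrite mulrz_sumr; apply: eq_bigr => p /eqP <-.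
Qed.

Lemma evalq_regroup W (r : seq G) s : uniq r -> (forall p, p \in s -> p.1 \in r) ->
  evalq W s = \sum_(y <- r) (coef s y)%:~R * W y.
Proof.
move=> uniq_r s_r; rewrite /evalq (big_regroup _ uniq_r s_r).
by apply: eq_bigr => y _; rewrite rmorph_sum mulr_suml; apply: eq_bigr => p /eqP <-.
Qed.

Lemma undup_fst_covers s p : p \in s -> p.1 \in undup (map fst s).
Proof. by move=> ps; rewrite mem_undup map_f. Qed.

Lemma independent_evalq_eq0 X W s :
  independent X -> supported X s -> eval s = 0 -> evalq W s = 0.
Proof.
move=> ind_X Xs s0; rewrite (evalq_regroup W (undup_uniq _) (@undup_fst_covers s)).
by rewrite big1 // => y _; rewrite (ind_X s Xs s0 y) mul0r.
Qed.

Lemma chain_supported (F : set (set G)) : total_on F subset -> forall s,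
  (forall p, p \in s -> exists2 X, F X & X p.1) ->
  s = [::] \/ exists2 X, F X & supported X s.
Proof.
move=> tot; elim=> [|p s IH] hs; first by left.
right; have [Y FY Yp] := hs p (mem_head _ _).
case: (IH (fun q qs => hs q (mem_behead (s:=p :: s) qs))) => [->|[Z FZ Zs]].
  by exists Y => // q; rewrite inE => /eqP ->.
case: (tot Y Z FY FZ) => [YZ|ZY].
  by exists Z => // q; rewrite inE => /orP[/eqP ->|/Zs //]; apply: YZ.
by exists Y => // q; rewrite inE => /orP[/eqP -> //|/Zs]; apply: ZY.
Qed.

Lemma exists_maximal_independent : exists X, maximal_independent X.
Proof.
have [A [ind_A max_A]] : exists A,
    independent A /\ forall B, (A `<` B)%classic -> ~ independent B.
  apply: Zorn_bigcup => F F_ind tot s Fs s0 y.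
  case: (chain_supported tot Fs) => [->|[X FX Xs]]; first by rewrite /coef big_nil.
  exact: (F_ind X FX s Xs s0 y).
exists A; split => // g Ag; apply: max_A; split; first by move=> x Ax; left.
by move=> /(_ g (or_intror erefl)).
Qed.

End FormalCombinations.

Section LinearExtension.
Variables (G : zmodType) (X : G -> Prop).
Hypothesis max_X : maximal_independent X.
Implicit Types (s : seq (G * int)) (W : G -> rat).

Lemma exists_representation g : exists p : int * seq (G * int),
  [/\ p.1 != 0, supported X p.2 & g *~ p.1 = eval p.2].
Proof.
case: max_X => ind_X max; case: (pselect (X g)) => Xg.
  by exists (1, [:: (g, 1)]); split; rewrite ?eval1 //; apply: supported1.
(* A dependence relation over [X] and [g] must involve [g]. *)
have := max g Xg; rewrite /independent.
move=> /existsNP [s] /not_implyP [Xgs] /not_implyP [s0] /existsNP [y cy].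
pose s' := [seq p <- s | p.1 != g].
have s_split : eval s = g *~ coef s g + eval s'.
  rewrite /eval (bigID (fun p => p.1 == g)) /= big_filter; congr (_ + _).
  by rewrite /coef mulrz_sumr; apply: eq_bigr => p /eqP ->.
have Xs' : supported X s'.
  by move=> p; rewrite mem_filter => /andP[pg /Xgs [//|pge]]; rewrite pge eqxx in pg.
have coef_s' z : z != g -> coef s z = coef s' z.
  move=> zg; rewrite /coef big_filter_cond; apply: eq_bigl => p.
  by case: (eqVneq p.1 z) => [->|_]; rewrite ?zg ?andbF.
have cg : coef s g != 0.
  apply/eqP => cg0; apply: cy; have s'0 : eval s' = 0 by rewrite -s0 s_split cg0 add0r.
  by case: (eqVneq y g) => [->//|yg]; rewrite coef_s' //; apply: ind_X.
exists (coef s g, scale (-1) s'); split => //=; first exact: supported_scale.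
by rewrite eval_scale mulrN1z; apply/eqP; rewrite -subr_eq0 opprK -s_split s0.
Qed.

Definition representation g := projT1 (cid (exists_representation g)).

Lemma representationP g : let p := representation g in
  [/\ p.1 != 0, supported X p.2 & g *~ p.1 = eval p.2].
Proof. exact: (projT2 (cid (exists_representation g))). Qed.

Definition qext W g : rat :=
  evalq W (representation g).2 / (representation g).1%:~R.

Lemma qext_rep W g c s :
  c != 0 -> supported X s -> g *~ c = eval s -> qext W g = evalq W s / c%:~R.
Proof.
move=> c0 Xs gcs; rewrite /qext; have := representationP g.
case: representation => c' s' /= [c'0 Xs' gcs'].
have E : eval (scale c s' ++ scale (- c') s) = 0.
  by rewrite eval_cat !eval_scale -gcs -gcs' -!mulrzA mulrN mulrNz mulrC subrr.
have := independent_evalq_eq0 W max_X.1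
  (supported_cat (supported_scale (k:=c) Xs') (supported_scale (k:=- c') Xs)) E.
rewrite evalq_cat !evalq_scale rmorphN mulNr => /eqP; rewrite subr_eq0 => /eqP h.
by apply/eqP; rewrite eqr_div ?intr_eq0 //; apply/eqP; rewrite mulrC h mulrC.
Qed.

Lemma qext_hom W : is_hom (qext W).
Proof.
move=> g1 g2; rewrite {2}/qext {2}/qext.
have := representationP g1; have := representationP g2.
case: representation => c2 s2 [c20 Xs2 e2]; case: representation => c1 s1 [c10 Xs1 e1] /=.
rewrite (@qext_rep W _ (c1 * c2) (scale c2 s1 ++ scale c1 s2)).
- by rewrite evalq_cat !evalq_scale intrM; field; rewrite !intr_eq0 c10 c20.
- by rewrite mulf_neq0.
- exact: supported_cat (supported_scale (k:=c2) Xs1) (supported_scale (k:=c1) Xs2).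
- by rewrite eval_cat !eval_scale -e1 -e2 mulrzDl -!mulrzA [c2 * c1]mulrC.
Qed.

Lemma qext_eval W s : supported X s -> qext W (eval s) = evalq W s.
Proof. by move=> Xs; rewrite (@qext_rep W _ 1 s) // ?mulr1z // divr1. Qed.

Lemma qext_X W x : X x -> qext W x = W x.
Proof.
move=> Xx; rewrite -{1}(eval1 x) qext_eval; last exact: supported1.
by rewrite /evalq big_seq1 mul1r.
Qed.

Definition delta (y : G) : G -> rat := fun x => (x == y)%:R.

Lemma evalq_delta s y : evalq (delta y) s = (coef s y)%:~R.
Proof.
rewrite /evalq /coef rmorph_sum [RHS]big_mkcond /=; apply: eq_bigr => p _.
by rewrite /delta; case: eqP; rewrite ?mulr1 ?mulr0.
Qed.

Lemma qext_delta_inj g : torsion_free G -> (forall y, qext (delta y) g = 0) -> g = 0.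
Proof.
move=> tf g0; rewrite /qext in g0; have := representationP g.
case: representation g0 => c s /= g0 [c0 Xs gcs]; apply: (torsion_free_mulrz tf _ c0).
rewrite gcs (eval_regroup (undup_uniq _) (@undup_fst_covers _ s)) big1 // => y _.
move: (g0 y); rewrite evalq_delta => /eqP.
by rewrite mulf_eq0 invr_eq0 !intr_eq0 (negPf c0) orbF => /eqP ->; rewrite mulr0z.
Qed.

End LinearExtension.

Lemma span_dependent (G : zmodType) (m : nat) : forall n (ys : nat -> G)
    (vs : 'I_n -> G) (A : 'I_n -> nat -> int),
  (m < n)%N -> (forall i, vs i = \sum_(j < m) ys j *~ A i j) ->
  exists2 c : 'I_n -> int, \sum_i vs i *~ c i = 0 & exists i, c i != 0.
Proof.
elim: m => [|m IH] n ys vs A mn vsA.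
  case: n mn vs A vsA => // n _ vs A vsA; exists (fun _ => 1); last by exists ord0.
  by rewrite big1 // => i _; rewrite vsA big_ord0 mul0rz.
case: (pselect (forall i, A i m = 0)) => [Am0|].
  apply: (IH n ys vs A (ltnW mn)) => i.
  by rewrite vsA big_ord_recr /= Am0 mulr0z addr0.
move=> /existsNP [k /eqP Akm0].
case: n mn vs A vsA k Akm0 => // n mn vs A vsA k Akm0.
pose a := A k m.
(* Eliminate the last generator [ys m], using row [k] as pivot. *)
pose vs' (i : 'I_n) := vs (lift k i) *~ a - vs k *~ A (lift k i) m.
pose A' (i : 'I_n) j := A (lift k i) j * a - A k j * A (lift k i) m.
have vsA' i : vs' i = \sum_(j < m) ys j *~ A' i j.
  rewrite /vs' !vsA !mulrz_suml -sumrB big_ord_recr /= -!mulrzA -mulrzBr.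
  rewrite [A k m * _]mulrC subrr mulr0z addr0.
  by apply: eq_bigr => j _; rewrite -!mulrzA -mulrzBr.
have [d d0 [i0 di0]] := IH n ys vs' A' mn vsA'.
pose c (i : 'I_n.+1) := if unlift k i is Some i' then d i' * a
                        else - \sum_(i' < n) d i' * A (lift k i') m.
exists c; last by exists (lift k i0); rewrite /c liftK mulf_neq0.
rewrite (bigD1_ord k) //= /c unlift_none.
under eq_bigr => i _ do rewrite liftK.
move: d0; rewrite /vs' /=.
under eq_bigr => i _ do rewrite mulrzBl -!mulrzA.
rewrite sumrB -mulrz_sumr => /eqP; rewrite subr_eq0 => /eqP E.
rewrite mulrNz addrC (eq_bigr (fun i => A (lift k i) m * d i)) => [|i _]; last exact: mulrC.
by rewrite -E; apply/eqP; rewrite subr_eq0; apply/eqP; apply: eq_bigr => i _; rewrite mulrC.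
Qed.

Lemma maximal_independent_infinite (G : zmodType) (X : G -> Prop) :
  maximal_independent X -> ~ finite_rank G -> forall W : seq G, exists x, X x /\ x \notin W.
Proof.
move=> max_X not_fin W; apply/not_existsP => X_W.
have XW x : X x -> x \in W by move=> Xx; apply/negPn/negP => xW; apply: (X_W x).
pose r := undup W; apply: not_fin; exists (size r) => s ind_s.
rewrite leqNgt; apply/negP => rs.
pose rep i := representation max_X s`_i.
pose vs (i : 'I_(size s)) := s`_i *~ (rep i).1.
pose A (i : 'I_(size s)) j := coef (rep i).2 r`_j.
have vsA i : vs i = \sum_(j < size r) r`_j *~ A i j.
  rewrite /vs /A /rep; have [_ Xs ->] := representationP max_X s`_i.
  rewrite (eval_regroup (undup_uniq W)) => [|p /Xs]; last by rewrite mem_undup => /XW.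
  by rewrite (big_nth 0) big_mkord.
have [d d0 [i0 di0]] := span_dependent rs vsA.
pose e := map (fun i : 'I_(size s) => (rep i).1 * d i) (enum 'I_(size s)).
have e_nth (i : 'I_(size s)) : e`_i = (rep i).1 * d i.
  by rewrite (nth_map i0) ?size_enum_ord // nth_ord_enum.
have /(_ i0) : forall i, e`_i = 0.
  apply: ind_s; first by rewrite size_map size_enum_ord.
  by apply: etrans d0; apply: eq_bigr => i _; rewrite e_nth mulrzA.
rewrite e_nth => /eqP; rewrite mulf_eq0 (negPf di0) orbF.
by have [/negPf -> _ _] := representationP max_X s`_i0.
Qed.

Section Pairing.
Variables (T : eqType) (X : T -> Prop).

Lemma injective_sequence (Y : T -> Prop) :
  (forall W : seq T, exists x, Y x /\ x \notin W) ->
  exists2 e : nat -> T, (forall k, Y (e k)) & injective e.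
Proof.
move=> Y_inf; have [fresh freshP] := choice Y_inf.
pose L := fix L n := if n is n'.+1 then fresh (L n') :: L n' else [::].
exists (fun k => fresh (L k)); first by move=> k; case: (freshP (L k)).
have inL j k : (j < k)%N -> fresh (L j) \in L k.
  elim: k => // k IH; rewrite ltnS leq_eqVlt => /orP[/eqP ->|/IH jk] /=.
    by rewrite mem_head.
  by rewrite inE jk orbT.
move=> j k; case: (ltngtP j k) => // jk e.
  by case: (freshP (L k)) => _; rewrite -e inL.
by case: (freshP (L j)) => _; rewrite e inL.
Qed.

(* [R (a, n, b)] reads [f (a, n) = b] for a partial injection [f] from
   [dom R * nat] into [dom R], with [dom R] a subset of [X]. *)
Definition pairing (R : set (T * nat * T)) :=
  [/\ (forall a n b, R (a, n, b) -> X a /\ X b),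
      (forall a n b b', R (a, n, b) -> R (a, n, b') -> b = b'),
      (forall a n a' n' b, R (a, n, b) -> R (a', n', b) -> a = a' /\ n = n'),
      (forall a n b, R (a, n, b) -> forall m, exists c, R (a, m, c)) &
      (forall a n b, R (a, n, b) -> exists c, R (b, 0%N, c))].

Definition dom (R : set (T * nat * T)) a := exists b, R (a, 0%N, b).

Lemma exists_maximal_pairing : exists R, pairing R /\
  forall R', (R `<` R')%classic -> ~ pairing R'.
Proof.
apply: Zorn_bigcup => F F_pairing tot.
have both t1 t2 : (exists2 R, F R & R t1) -> (exists2 R, F R & R t2) ->
    exists2 R, F R & R t1 /\ R t2.
  move=> [R1 F1 r1] [R2 F2 r2]; case: (tot R1 R2 F1 F2) => [R12|R21].
    by exists R2 => //; split => //; apply: R12.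
  by exists R1 => //; split => //; apply: R21.
split.
- by move=> a n b [R FR r]; case: (F_pairing R FR) => inX _ _ _ _; apply: inX r.
- move=> a n b b' r1 r2; have [R FR [{}r1 {}r2]] := both _ _ r1 r2.
  by case: (F_pairing R FR) => _ fun_R _ _ _; apply: fun_R r1 r2.
- move=> a n a' n' b r1 r2; have [R FR [{}r1 {}r2]] := both _ _ r1 r2.
  by case: (F_pairing R FR) => _ _ inj_R _ _; apply: inj_R r1 r2.
- move=> a n b [R FR r] m; case: (F_pairing R FR) => _ _ _ tot_R _.
  by have [c rc] := tot_R _ _ _ r m; exists c, R.
- move=> a n b [R FR r]; case: (F_pairing R FR) => _ _ _ _ cl_R.
  by have [c rc] := cl_R _ _ _ r; exists c, R.
Qed.

Lemma to_nat_inj (p q : nat * nat) : to_nat p = to_nat q -> p = q.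
Proof. by move=> e; rewrite -(cancel_of_to p) e cancel_of_to. Qed.

Lemma triple_inj (a a' b b' : T) (n n' : nat) :
  (a, n, b) = (a', n', b') -> [/\ a = a', n = n' & b = b'].
Proof. by case=> -> -> ->. Qed.

Lemma dom_pairing R a n b : pairing R -> R (a, n, b) -> dom R a.
Proof. by case=> _ _ _ tot_R _ r; have [c rc] := tot_R _ _ _ r 0%N; exists c. Qed.

Lemma pairing_extend R (e : nat -> T) : pairing R -> injective e ->
  (forall k, X (e k) /\ ~ dom R (e k)) ->
  pairing (fun t => R t \/ exists i n, t = (e i, n, e (to_nat (i, n)))).
Proof.
move=> pair_R inj_e e_out; have [inX fun_R inj_R tot_R cl_R] := pair_R.
split.
- move=> a n b [r|[i [m /triple_inj [-> _ ->]]]]; first exact: inX r.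
  by split; [exact: (e_out i).1 | exact: (e_out _).1].
- move=> a n b b' [r1|[i1 [m1 /triple_inj [a1 n1 ->]]]]
    [r2|[i2 [m2 /triple_inj [a2 n2 ->]]]].
  + exact: fun_R r1 r2.
  + by case: (e_out i2).2; rewrite -a2; apply: dom_pairing pair_R r1.
  + by case: (e_out i1).2; rewrite -a1; apply: dom_pairing pair_R r2.
  + have i12 : i1 = i2 by apply: inj_e; rewrite -a1 -a2.
    by rewrite i12 -n1 -n2.
- move=> a n a' n' b [r1|[i1 [m1 /triple_inj [-> -> b1]]]]
    [r2|[i2 [m2 /triple_inj [-> -> b2]]]].
  + exact: inj_R r1 r2.
  + have [c rc] := cl_R _ _ _ r1.
    by case: (e_out (to_nat (i2, m2))).2; rewrite -b2; exists c.
  + have [c rc] := cl_R _ _ _ r2.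
    by case: (e_out (to_nat (i1, m1))).2; rewrite -b1; exists c.
  + by move: b1; rewrite b2 => /inj_e /to_nat_inj [-> ->].
- move=> a n b [r|[i [m /triple_inj [-> _ _]]]] k.
    by have [c rc] := tot_R _ _ _ r k; exists c; left.
  by exists (e (to_nat (i, k))); right; exists i, k.
- move=> a n b [r|[i [m /triple_inj [_ _ ->]]]].
    by have [c rc] := cl_R _ _ _ r; exists c; left.
  by exists (e (to_nat (to_nat (i, m), 0%N))); right; exists (to_nat (i, m)), 0%N.
Qed.

Hypothesis X_infinite : forall W : seq T, exists x, X x /\ x \notin W.

Lemma maximal_pairing_cofinite R : pairing R ->
  (forall R', (R `<` R')%classic -> ~ pairing R') ->
  exists W : seq T, forall x, X x -> ~ dom R x -> x \in W.
Proof.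
move=> pair_R max_R; apply/not_existsP => cofin.
have [e e_out inj_e] : exists2 e : nat -> T,
    (forall k, X (e k) /\ ~ dom R (e k)) & injective e.
  apply: (injective_sequence (Y := fun x => X x /\ ~ dom R x)) => W.
  have /existsNP [x] := cofin W.
  by move=> /not_implyP [Xx] /not_implyP [x_dom /negP xW]; exists x.
apply: max_R (pairing_extend pair_R inj_e e_out); split; first by move=> t; left.
move=> /(_ (e 0%N, 0%N, e (to_nat (0%N, 0%N)))) r; case: (e_out 0%N).2.
by exists (e (to_nat (0%N, 0%N))); apply: r; right; exists 0%N, 0%N.
Qed.

(* Points of [dom R] use the even codes of [f]; the finitely many points of
   [X] outside [dom R] use the odd codes of one fixed [a0] in [dom R]. *)
Lemma infinite_pairing : exists phi : T -> nat -> T,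
  (forall x n, X x -> X (phi x n)) /\
  (forall x x' n n', X x -> X x' -> phi x n = phi x' n' -> x = x' /\ n = n').
Proof.
have [R [pair_R max_R]] := exists_maximal_pairing.
have [W W_out] := maximal_pairing_cofinite pair_R max_R.
case: pair_R => inX _ inj_R tot_R _.
have [a0 dom_a0] : exists a0, dom R a0.
  apply/not_existsP => no_dom; have [x [Xx xW]] := X_infinite W.
  by rewrite (W_out x Xx (no_dom x)) in xW.
pose f a n := if pselect (exists b, R (a, n, b)) is left H then projT1 (cid H) else a.
have fP a n : dom R a -> R (a, n, f a n).
  move=> [b rb]; rewrite /f; case: pselect => [H|[]]; first exact: (projT2 (cid H)).
  exact: tot_R rb n.
have f_inj a a' k k' : dom R a -> dom R a' -> f a k = f a' k' -> a = a' /\ k = k'.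
  by move=> da da' e; apply: inj_R (fP a k da) _; rewrite e; apply: fP.
pose phi x n := if pselect (dom R x) then f x n.*2
                else f a0 (to_nat (index x W, n)).*2.+1.
exists phi; split.
  move=> x n Xx; rewrite /phi; case: pselect => x_dom.
    by have [] := inX _ _ _ (fP _ n.*2 x_dom).
  by have [] := inX _ _ _ (fP _ (to_nat (index x W, n)).*2.+1 dom_a0).
move=> x x' n n' Xx Xx'; rewrite /phi.
case: pselect => x_dom; case: pselect => x'_dom /f_inj.
- by move=> /(_ x_dom x'_dom) [-> /double_inj].
- by move=> /(_ x_dom dom_a0) [_ /(congr1 odd)]; rewrite /= !odd_double.
- by move=> /(_ dom_a0 x'_dom) [_ /(congr1 odd)]; rewrite /= !odd_double.
move=> /(_ dom_a0 dom_a0) [_ /succn_inj /double_inj /to_nat_inj [ix ->]].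
split => //.
by rewrite -(nth_index x (W_out x Xx x_dom)) ix nth_index // W_out.
Qed.

End Pairing.

Section Image.
Variables (G W : zmodType) (h : G -> W).
Hypothesis hom_h : is_hom h.

Definition image_pred : {pred W} := fun v => `[< exists g, h g = v >].

Fact image_zmod_closed : zmod_closed image_pred.
Proof.
split; first by apply/asboolP; exists 0; apply: hom0.
by move=> _ _ /asboolP [a <-] /asboolP [b <-]; apply/asboolP; exists (a - b); apply: homB.
Qed.

HB.instance Definition _ := GRing.isZmodClosed.Build W image_pred image_zmod_closed.
Record image := Image { image_val : W; image_valP : image_val \in image_pred }.
HB.instance Definition _ := [isSub for image_val].
HB.instance Definition _ := [Choice of image by <:].
HB.instance Definition _ := [SubChoice_isSubZmodule of image by <:].

Lemma kernel_embeds_in_quotient (f : G -> W) : is_hom f -> injective f ->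
  (forall g, exists g', h g' = f g) -> embeds_in_quotient (fun x => h x = 0).
Proof.
move=> hom_f inj_f f_h.
have hP g : h g \in image_pred by apply/asboolP; exists g.
have fP g : f g \in image_pred by case: (f_h g) => g' <-.
exists image, (fun g => Image (hP g)), (fun g => Image (fP g)); split.
- split.
  + by move=> x y; apply: val_inj; rewrite /= hom_h.
  + by case=> v vP; have /asboolP [g gv] := vP; exists g; apply: val_inj.
  + by move=> x; split => [/(congr1 val) //|hx]; apply: val_inj; rewrite /= hx.
- by move=> x y; apply: val_inj; rewrite /= hom_f.
- by move=> x y /(congr1 val) /inj_f.
Qed.

End Image.

Section ReducedSummands.
Variables (G : zmodType) (A B N P : G -> Prop).
Hypotheses (reduced_G : reduced G) (sub_A : is_subgroup A) (sub_B : is_subgroup B).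
Hypotheses (disjoint_AB : forall x, A x -> B x -> x = 0)
  (decomp : forall g, exists a b, [/\ A a, B b & g = a + b]).
Hypotheses (sub_NA : forall x, N x -> A x) (sub_P : is_subgroup P)
  (divisible_P : forall x n, P x -> exists2 y, P y & N (y *+ n.+1 - x)).

(* The [B]-components of the elements of [P] form a divisible subgroup. *)
Lemma reduced_summand_absorbs x : P x -> A x.
Proof.
pose D b := B b /\ exists2 g, P g & A (g - b).
have divD : divisible_subgroup D.
  split; first split.
  - split; first exact: subgroup0.
    by exists 0; rewrite ?subrr; apply: subgroup0.
  - move=> u v [Bu [gu Pu Au]] [Bv [gv Pv Av]]; split; first exact: subgroupB.
    exists (gu - gv); first exact: subgroupB.
    have -> : gu - gv - (u - v) = (gu - u) - (gv - v).
      by rewrite !opprB addrACA [RHS]addrACA [- gv + _]addrC.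
    exact: subgroupB.
  move=> b n [Bb [g Pg Agb]]; have [y Py Ny] := divisible_P n Pg.
  have [a' [b' [Aa' Bb' ye]]] := decomp y.
  exists b'; split; first by split => //; exists y; rewrite // ye addrK.
  apply/eqP; rewrite -subr_eq0; apply/eqP; apply: disjoint_AB; last first.
    by apply: subgroupB => //; apply: subgroupMn.
  have -> : b' *+ n.+1 - b = (y *+ n.+1 - g) + (g - b) - a' *+ n.+1.
    by rewrite addrA subrK ye mulrnDl [a' *+ _ + _]addrC addrAC addrK.
  apply: subgroupB => //; last exact: subgroupMn.
  by apply: subgroupD => //; apply: sub_NA.
move=> Px; have [a [b [Aa Bb xe]]] := decomp x.
have b0 : b = 0 by apply: (reduced_G divD); split => //; exists x; rewrite // xe addrK.
by rewrite xe b0 addr0.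
Qed.

End ReducedSummands.

Lemma not_semi_generalized_Bassian (G : zmodType) (N P : G -> Prop) (g : G) :
  reduced G -> is_subgroup N -> embeds_in_quotient N -> is_subgroup P ->
  (forall x n, P x -> exists2 y, P y & N (y *+ n.+1 - x)) ->
  P g -> g != 0 -> (forall k, N (g *~ k) -> g *~ k = 0) ->
  ~ semi_generalized_Bassian G.
Proof.
move=> reduced_G sub_N emb sub_P divisible_P Pg g0 gN sgb.
have [A [[B [sub_A sub_B AB decomp]] [NA ess]]] := sgb N sub_N emb.
have Ag := reduced_summand_absorbs reduced_G sub_A sub_B AB decomp NA sub_P divisible_P Pg.
pose S x := exists k : int, x = g *~ k.
have sub_S : is_subgroup S.
  split; first by exists 0; rewrite mulr0z.
  by move=> _ _ [k1 ->] [k2 ->]; exists (k1 - k2); rewrite mulrzBr.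
have [||x [Nx [k xk] x0]] := ess S sub_S.
- by move=> _ [k ->]; apply: subgroupMz.
- by exists g; split; [exists 1; rewrite mulr1z | apply/eqP].
by apply: x0; rewrite xk; apply: gN; rewrite -xk.
Qed.

Definition fact_cofactor (c : int) : int :=
  match c with Posz n => (n.-1)`!%:Z | Negz n => - (n`!)%:Z end.

Lemma invr_int_fact (c : int) : c != 0 ->
  (c%:~R)^-1 = (fact_cofactor c)%:~R / ((`|c|%N)`!)%:R :> rat.
Proof.
move=> c0; have fact_cofactorP : (fact_cofactor c)%:~R * c%:~R = ((`|c|%N)`!)%:R :> rat.
  case: c c0 => [[|k]|k] // _ /=; first by rewrite -!pmulrn -natrM mulnC -factS.
  by rewrite NegzE !rmorphN /= mulrNN -!pmulrn -natrM mulnC -factS.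
rewrite -fact_cofactorP invfM mulrA divff ?mul1r //.
apply/eqP => e0; move: fact_cofactorP; rewrite e0 mul0r => /esym/eqP.
by rewrite pnatr_eq0 gtn_eqF // fact_gt0.
Qed.

Section InfiniteRank.
Variables (G : zmodType) (X : G -> Prop) (phi : G -> nat -> G) (x0 : G).
Hypotheses (tf : torsion_free G) (max_X : maximal_independent X) (Xx0 : X x0).
Hypotheses (phiX : forall x n, X x -> X (phi x n))
  (phi_inj : forall x x' n n', X x -> X x' -> phi x n = phi x' n' -> x = x' /\ n = n').

Local Notation qext := (qext max_X).

Definition unpair (z : G) : option (G * nat) :=
  if pselect (exists p : G * nat, X p.1 /\ phi p.1 p.2 = z) is left H
  then Some (projT1 (cid H)) else None.

Lemma unpair_phi x n : X x -> unpair (phi x n) = Some (x, n).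
Proof.
move=> Xx; rewrite /unpair; case: pselect => [H|[]]; last by exists (x, n).
by case: (cid H) => [[x' n'] [/= Xx' /(phi_inj Xx' Xx) [-> ->]]].
Qed.

Definition weight (y z : G) : rat :=
  if unpair z is Some (x, n) then (x == y)%:R / (n`!)%:R else 0.

Definition hull_map (g : G) : G -> rat := fun y => qext (weight y) g.
Definition coords (g : G) : G -> rat := fun y => qext (delta y) g.

Lemma hull_map_phi x n y : X x -> hull_map (phi x n) y = (x == y)%:R / (n`!)%:R.
Proof. by move=> Xx; rewrite /hull_map qext_X /weight ?unpair_phi //; apply: phiX. Qed.

Lemma hull_map_hom : is_hom hull_map.
Proof. by move=> a b; apply: funext => y; rewrite /hull_map qext_hom. Qed.

Lemma coords_hom : is_hom coords.
Proof. by move=> a b; apply: funext => y; rewrite /coords qext_hom. Qed.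

Lemma coords_inj : injective coords.
Proof.
move=> a b ab; apply/eqP; rewrite -subr_eq0; apply/eqP.
apply: (qext_delta_inj (max_X := max_X) tf) => y; have aby := congr1 (fun f => f y) ab.
by rewrite (homB (qext_hom _ _)) /= /coords in aby *; rewrite aby subrr.
Qed.

(* The coordinate [k_y / c] of [g] is [k_y * fact_cofactor c] times the
   weight [1 / |c|!] of [phi y |c|]. *)
Lemma coords_in_image g : exists g', hull_map g' = coords g.
Proof.
have [c0 Xs gcs] := representationP max_X g.
set c := (representation max_X g).1 in c0 gcs *.
set s := (representation max_X g).2 in Xs gcs *.
pose s' := [seq (phi p.1 `|c|, p.2 * fact_cofactor c) | p <- s].
have Xs' : supported X s' by move=> _ /mapP [p /Xs Xp ->]; apply: phiX.
exists (eval s'); apply: funext => y.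
rewrite /hull_map /coords qext_eval // (qext_rep max_X (delta y) c0 Xs gcs).
rewrite /evalq big_map mulr_suml.
apply: eq_big_seq => p /Xs Xp /=; rewrite /weight unpair_phi // invr_int_fact //.
by rewrite /delta intrM; ring.
Qed.

Lemma hull_map_line r : exists g, forall y, hull_map g y = r * (x0 == y)%:R.
Proof.
have d0 : denq r != 0 by apply: denq_neq0.
exists (phi x0 `|denq r| *~ (numq r * fact_cofactor (denq r))) => y.
rewrite /hull_map (homMz (qext_hom _ _)) -/(hull_map _ y) hull_map_phi //.
rewrite -[in RHS](divq_num_den r).
by rewrite invr_int_fact // -mulrzr intrM; ring.
Qed.

Lemma not_semi_generalized_Bassian_of_pairing :
  reduced G -> ~ semi_generalized_Bassian G.
Proof.
move=> reduced_G; have hom_at y : is_hom (hull_map^~ y) by move=> a b; apply: qext_hom.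
pose N g := hull_map g = 0.
pose P g := forall y, y != x0 -> hull_map g y = 0.
apply: (@not_semi_generalized_Bassian _ N P (phi x0 0)) => //.
- split=> [|a b]; first exact: hom0 hull_map_hom.
  by rewrite /N (homB hull_map_hom) => -> ->; rewrite subrr.
- exact: (kernel_embeds_in_quotient hull_map_hom coords_hom coords_inj coords_in_image).
- split=> [y _|a b Pa Pb y yx0]; first exact: (hom0 (hom_at y)).
  by rewrite (homB (hom_at y)) Pa ?Pb ?subrr.
- move=> g n Pg; have [y hy] := hull_map_line (hull_map g x0 / n.+1%:R).
  exists y => [z zx0|]; first by rewrite hy eq_sym (negPf zx0) mulr0.
  apply: funext => z; rewrite (homB (hom_at z)) (homMn (hom_at z)) hy.
  case: (eqVneq z x0) => [->|zx0]; last by rewrite (Pg z zx0) /= mulr0 mul0rn subrr.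
  by rewrite /= mulr1 -(mulr_natr (hull_map g x0 / _)) divfK ?pnatr_eq0 // subrr.
- by move=> y yx0; rewrite hull_map_phi // eq_sym (negPf yx0) mul0r.
- exact: independent_neq0 max_X.1 (phiX 0 Xx0).
move=> k /(congr1 (@^~ x0)); rewrite /= (homMz (hom_at x0)) hull_map_phi // eqxx.
by rewrite fact0 divr1 -mulrzr mul1r => /eqP; rewrite intr_eq0 => /eqP ->; rewrite mulr0z.
Qed.

End InfiniteRank.

Lemma infinite_rank_not_semi_generalized_Bassian (G : zmodType) :
  torsion_free G -> reduced G -> ~ finite_rank G -> ~ semi_generalized_Bassian G.
Proof.
move=> tf reduced_G not_fin; have [X max_X] := exists_maximal_independent G.
have X_inf := maximal_independent_infinite max_X not_fin.
have [phi [phiX phi_inj]] := infinite_pairing X_inf.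
have [x0 [Xx0 _]] := X_inf [::].
exact: (not_semi_generalized_Bassian_of_pairing tf max_X Xx0 phiX phi_inj).
Qed.

Theorem proposition2p6 (G : zmodType) (htf : torsion_free G) (hred : reduced G) :
  (semi_generalized_Bassian G <-> Bassian G) /\ (Bassian G <-> finite_rank G).
Proof.
have not_fin := infinite_rank_not_semi_generalized_Bassian htf hred.
have fin_B := finite_rank_Bassian htf.
have B_sgB := @Bassian_semi_generalized_Bassian G.
split; split.
- by move=> sgB; apply: fin_B; apply: contrapT => infinite; apply: not_fin infinite sgB.
- exact: B_sgB.
- by move=> B; apply: contrapT => infinite; apply: not_fin infinite (B_sgB B).
- exact: fin_B.
Qed.
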